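(* Every probabilistic database in $\mathsf{FO}(\mathsf{TI})$ has the finite moments property.
   Context: Fix a countably infinite universe $U$. A database schema is a finite nonempty set of relation symbols with arities; facts are $R(u_1,\dots,u_{\mathrm{ar}(R)})$ with $u_i\in U$; an instance is a finite set of facts ($|D|$ = number of facts); $\mathrm{adom}(D)$ is the set of elements of $U$ occurring in $D$. A probabilistic database (PDB) is a discrete probability space $(\mathbb D,P)$ with $\mathbb D$ a nonempty countable set of instances. A PDB has the finite moments property if $\sum_{D\in\mathbb D}|D|^kP(\{D\})<\infty$ for all $k\in\mathbb N_+$. A PDB $\mathcal I$ is tuple-independent if for all pairwise distinct facts $f_1,\dots,f_k$, $\Pr_{I\sim\mathcal I}(f_1\in I,\dots,f_k\in I)=\prod_i\Pr_{I\sim\mathcal I}(f_i\in I)$. An FO-view consists of one first-order formula $\Phi_R(x_1,\dots,x_{\mathrm{ar}(R)})$ per output relation symbol $R$, evaluated under active domain semantics (quantifiers range over $\mathrm{adom}(D)$ and the formula's constants), mapping $D$ to the instance containing $R(\bar a)$ for all tuples $\bar a$ over $\mathrm{adom}(D)\cup\mathrm{adom}(\Phi_R)$ with $D\models\Phi_R[\bar a]$. The image of a PDB $(\mathbb D,P)$ under a view $V$ is the PDB on $V(\mathbb D)$ with $P'(\{D'\})=P(\{D:V(D)=D'\})$. $\mathsf{FO}(\mathsf{TI})$ is the class of images of tuple-independent PDBs under FO-views. *)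

From HB Require Import structures.
From mathcomp Require Import all_boot all_order all_algebra.
From mathcomp Require Import finmap.
From mathcomp Require Import all_classical all_reals all_analysis.

Set Implicit Arguments.
Unset Strict Implicit.
Unset Printing Implicit Defensive.

Import Order.TTheory GRing.Theory Num.Theory.
Local Open Scope classical_set_scope.
Local Open Scope ring_scope.
Local Open Scope fset_scope.

(* The universe U is fixed to be nat (a countably infinite set). *)
Definition U := nat.

(* A schema: a finite type S of relation symbols with arity ar : S -> nat.
   A fact R(u_1,...,u_ar(R)) is a pair (R, [u_1; ...; u_ar(R)]) of correct arity. *)
Section Schema.
Variables (S : finType) (ar : S -> nat).

Definition wf_fact (f : S * seq U) : bool := size f.2 == ar f.1.
Definition fact := {f : S * seq U | wf_fact f}.
Definition instance := {fset fact}.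

Definition adom (D : instance) : seq U := flatten [seq (val f).2 | f <- D].

Inductive term := TVar of nat | TConst of U.

Inductive form :=
| FAtom of S & seq term
| FEq of term & term
| FNot of form
| FAnd of form & form
| FOr of form & form
| FEx of nat & form
| FAll of nat & form.

Definition teval (env : nat -> U) (t : term) : U :=
  match t with TVar x => env x | TConst c => c end.

Definition upd (env : nat -> U) (x : nat) (a : U) : nat -> U :=
  fun y => if y == x then a else env y.

Definition tconsts (t : term) : seq U :=
  match t with TVar _ => [::] | TConst c => [:: c] end.

Fixpoint consts (phi : form) : seq U :=
  match phi with
  | FAtom _ ts => flatten (map tconsts ts)
  | FEq t1 t2 => tconsts t1 ++ tconsts t2
  | FNot p => consts p
  | FAnd p q | FOr p q => consts p ++ consts q
  | FEx _ p | FAll _ p => consts p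
  end.

Definition tvars (t : term) : seq nat :=
  match t with TVar x => [:: x] | TConst _ => [::] end.

Fixpoint fv (phi : form) : seq nat :=
  match phi with
  | FAtom _ ts => flatten (map tvars ts)
  | FEq t1 t2 => tvars t1 ++ tvars t2
  | FNot p => fv p
  | FAnd p q | FOr p q => fv p ++ fv q
  | FEx x p | FAll x p => [seq y <- fv p | y != x]
  end.

Fixpoint atoms_ok (phi : form) : bool :=
  match phi with
  | FAtom r ts => size ts == ar r
  | FEq _ _ => true
  | FNot p => atoms_ok p
  | FAnd p q | FOr p q => atoms_ok p && atoms_ok q
  | FEx _ p | FAll _ p => atoms_ok p
  end.

(* phi is a formula phi(x_1,...,x_n): free variables among x_1..x_n,
   where x_i is encoded as the variable number i-1 *)
Definition form_wf (n : nat) (phi : form) : bool :=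
  atoms_ok phi && all (fun x => x < n)%N (fv phi).

Fixpoint holds (D : instance) (dom : seq U) (env : nat -> U) (phi : form) : bool :=
  match phi with
  | FAtom r ts => (r, map (teval env) ts) \in [seq val f | f <- D]
  | FEq t1 t2 => teval env t1 == teval env t2
  | FNot p => ~~ holds D dom env p
  | FAnd p q => holds D dom env p && holds D dom env q
  | FOr p q => holds D dom env p || holds D dom env q
  | FEx x p => has (fun a => holds D dom (upd env x a) p) dom
  | FAll x p => all (fun a => holds D dom (upd env x a) p) dom
  end.

(* active-domain semantics: D |= phi[a] with quantifiers over adom(D) ∪ adom(phi) *)
Definition sat (D : instance) (phi : form) (a : seq U) : bool :=
  holds D (adom D ++ consts phi) (fun i => nth 0%N a i) phi.

End Schema.

Fixpoint tuples (s : seq U) (n : nat) : seq (seq U) :=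
  match n with
  | 0 => [:: [::]]
  | n'.+1 => [seq a :: t | a <- s, t <- tuples s n']
  end.

Record fo_view (S : finType) (ar : S -> nat) (S' : finType) (ar' : S' -> nat) := FOView {
  vphi : S' -> form S;
  vphi_wf : forall R : S', form_wf ar (ar' R) (vphi R)
}.

Definition view_inst (S : finType) (ar : S -> nat) (S' : finType) (ar' : S' -> nat)
  (V : fo_view ar ar') (D : instance ar) : instance ar' :=
  [fset f | f in pmap insub
     (flatten [seq [seq (R, a) | a <- tuples (adom D ++ consts (vphi V R)) (ar' R)
                               & sat D (vphi V R) a]
              | R <- enum S'])].

Record pdb (R : realType) (S : finType) (ar : S -> nat) := PDB {
  pdb_dom : set (instance ar);
  pdb_P : instance ar -> R;
  pdb_dom_nonempty : pdb_dom !=set0;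
  pdb_dom_countable : countable pdb_dom;
  pdb_P_ge0 : forall D, pdb_dom D -> 0 <= pdb_P D;
  pdb_P_sum1 : (\esum_(D in pdb_dom) (pdb_P D)%:E = 1)%E
}.

Definition Pr (R : realType) (S : finType) (ar : S -> nat) (I : pdb R ar)
  (E : set (instance ar)) : R :=
  fine (\esum_(D in pdb_dom I `&` E) (pdb_P I D)%:E)%E.

Definition finite_moments (R : realType) (S : finType) (ar : S -> nat)
  (dom : set (instance ar)) (P : instance ar -> R) : Prop :=
  forall k : nat, (0 < k)%N ->
    (\esum_(D in dom) ((#|` D|%:R ^+ k * P D)%:E) < +oo)%E.

Definition tuple_independent (R : realType) (S : finType) (ar : S -> nat)
  (I : pdb R ar) : Prop :=
  forall fs : seq (fact ar), uniq fs ->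
    Pr I [set D | forall f, f \in fs -> f \in D]
    = \prod_(f <- fs) Pr I [set D | f \in D].

Definition in_FO_TI (R : realType) (S' : finType) (ar' : S' -> nat) (J : pdb R ar') : Prop :=
  exists (S : finType) (ar : S -> nat) (I : pdb R ar) (V : fo_view ar ar'),
    (0 < #|S|)%N /\ tuple_independent I /\
    pdb_dom J = (view_inst V @` pdb_dom I)%classic /\
    (forall D', pdb_dom J D' -> pdb_P J D' = Pr I [set D | view_inst V D = D']).

(* For a tuple-independent PDB with fact marginals p_f, independence gives
   E[1{A <= D} z^|D n B|] = prod_(f in A) p_f * prod_(g in B) (1 + (z - 1) p_g)
   for z >= 0 and distinct facts A, B (induction on B, splitting off one fact).
   At z = 1/2 an instance D0 of positive mass bounds the left side from below by
   P(D0) 2^-|D0|, while the right side is at most exp(-sum_B p_g / 2); hence the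
   total marginal mass of any finite set of facts is bounded.  At z = e this
   bound yields E[e^|D|] < oo.  An FO-view enlarges instances only polynomially,
   |V(D)| <= m (|D| + 1)^d, so |V(D)|^k <= C e^|D|, and every moment of the image
   E_J[|D'|^k] = E_I[|V(D)|^k] is finite. *)

From HB Require Import structures.
From mathcomp Require Import all_boot all_order all_algebra.
From mathcomp Require Import finmap.
From mathcomp Require Import all_classical all_reals all_analysis.
From mathcomp Require Import lra zify.

Set Implicit Arguments.
Unset Strict Implicit.
Unset Printing Implicit Defensive.
Import Order.TTheory GRing.Theory Num.Theory.

Local Open Scope classical_set_scope.
Local Open Scope ring_scope.

Section RealBounds.
Variable R : realType.

Lemma prod1D_le_expR_sum (I : Type) (r : seq I) (F : I -> R) :
  (forall i, -1 <= F i) -> \prod_(i <- r) (1 + F i) <= expR (\sum_(i <- r) F i).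
Proof.
move=> F_ge; rewrite expR_sum; apply: ler_prod => i _.
by rewrite expR_ge1Dx andbT -lerBlDl sub0r F_ge.
Qed.

Lemma exprn_le_fact_expR (x : R) n : 0 <= x -> x ^+ n <= n`!%:R * expR x.
Proof.
move=> x0; case: n => [|n].
  by rewrite expr0 mul1r (le_trans _ (expR_ge1Dx x)) // lerDl.
have fact_gt0 : 0 < n.+1`!%:R :> R by rewrite ltr0n fact_gt0.
apply: le_trans (ler_wpM2l (ltW fact_gt0) (expR_ge1Dxn n x0)).
by rewrite mulrDr mulr1 mulrCA divff ?gt_eqF // mulr1 lerDr.
Qed.

End RealBounds.

Lemma ge0_esumZl (R : realType) (T : choiceType) (A : set T) (a : T -> \bar R)
    (r : R) :
  0 <= r -> (forall x, A x -> (0 <= a x)%E) ->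
  (\esum_(x in A) (r%:E * a x) = r%:E * \esum_(x in A) a x)%E.
Proof.
move=> r0 a0; rewrite esum_mkcond [in RHS]esum_mkcond.
set b := fun x => if x \in A then a x else 0%E.
have b0 x : (0 <= b x)%E by rewrite /b; case: ifPn => // /set_mem/a0.
rewrite (eq_esum (b := fun x => r%:E * b x)%E); last first.
  by move=> x _; rewrite /b; case: ifP; rewrite ?mule0.
rewrite /esum -ereal_supZl //; last first.
  by apply/set0P; exists 0%E, set0; rewrite ?fsbig_set0 //; exact: fsets_set0.
congr ereal_sup; apply/seteqP; split => [_ [X XT <-]|_ [_ [X XT <-] <-]].
  by exists (\sum_(x \in X) b x)%E; [exists X|rewrite ge0_mule_fsumr].
by exists X => //; rewrite ge0_mule_fsumr.
Qed.

Section Expectation.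
Local Open Scope ereal_scope.
Variables (R : realType) (S : finType) (ar : S -> nat) (I : pdb R ar).
Implicit Types (X Y Z : instance ar -> R) (E : set (instance ar)).

Definition expect X : \bar R := \esum_(D in pdb_dom I) (X D * pdb_P I D)%:E.

Lemma eq_expect X Y : (forall D, pdb_dom I D -> X D = Y D) -> expect X = expect Y.
Proof. by move=> XY; apply: eq_esum => D /XY ->. Qed.

Lemma le_expect X Y : (forall D, pdb_dom I D -> (0 <= X D <= Y D)%R) ->
  expect X <= expect Y.
Proof.
move=> XY; apply: le_esum => D /[dup] /pdb_P_ge0 P0 /XY /andP[_ le_XY].
by rewrite lee_fin ler_wpM2r.
Qed.

Lemma expectD X Y : (forall D, pdb_dom I D -> (0 <= X D)%R) ->
  (forall D, pdb_dom I D -> (0 <= Y D)%R) ->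
  expect (fun D => X D + Y D)%R = expect X + expect Y.
Proof.
move=> X0 Y0; rewrite /expect -esumD => [|D hD|D hD].
- by apply: eq_esum => D _; rewrite mulrDl EFinD.
- by rewrite lee_fin mulr_ge0 ?X0 ?pdb_P_ge0.
- by rewrite lee_fin mulr_ge0 ?Y0 ?pdb_P_ge0.
Qed.

Lemma expectZ (c : R) X : (0 <= c)%R -> (forall D, pdb_dom I D -> (0 <= X D)%R) ->
  expect (fun D => c * X D)%R = c%:E * expect X.
Proof.
move=> c0 X0; rewrite /expect -ge0_esumZl // => [|D hD].
- by apply: eq_esum => D _; rewrite -EFinM mulrA.
- by rewrite lee_fin mulr_ge0 ?X0 ?pdb_P_ge0.
Qed.

(* For [c < 0] it is [Y] that splits as [X + (- c) Z], and the finiteness of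
   [expect Y] lets us subtract. *)
Lemma expect_lincomb (c y w : R) X Y Z :
  (forall D, pdb_dom I D -> X D = Y D + c * Z D)%R ->
  expect Y = y%:E -> expect Z = w%:E ->
  (forall D, pdb_dom I D -> (0 <= X D)%R) ->
  (forall D, pdb_dom I D -> (0 <= Y D)%R) ->
  (forall D, pdb_dom I D -> (0 <= Z D)%R) ->
  expect X = (y + c * w)%:E.
Proof.
move=> XE EY EZ X0 Y0 Z0; have [c0|c0] := lerP 0 c.
  rewrite (eq_expect XE) expectD ?expectZ ?EY ?EZ // => D hD.
  by rewrite mulr_ge0 ?Z0.
have Nc0 : (0 <= - c)%R by rewrite oppr_ge0 ltW.
have YE D : pdb_dom I D -> Y D = (X D + - c * Z D)%R.
  by move/XE ->; rewrite mulNr addrK.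
have := expectD X0 (fun D hD => mulr_ge0 Nc0 (Z0 D hD)).
rewrite expectZ // -(eq_expect YE) EY EZ.
by case: (expect X) => [x||] //= [->]; congr EFin; rewrite mulNr; lra.
Qed.

Lemma esum_P_setI_le1 E : \esum_(D in pdb_dom I `&` E) (pdb_P I D)%:E <= 1.
Proof.
rewrite -(pdb_P_sum1 I) esum_mkcondr; apply: le_esum => D hD.
by case: ifP => // _; rewrite lee_fin pdb_P_ge0.
Qed.

Lemma PrE E : (Pr I E)%:E = \esum_(D in pdb_dom I `&` E) (pdb_P I D)%:E.
Proof.
rewrite /Pr fineK // ge0_fin_numE ?(le_lt_trans (esum_P_setI_le1 E)) ?ltry //.
by apply: esum_ge0 => D [hD _]; rewrite lee_fin pdb_P_ge0.
Qed.

Lemma Pr_ge0 E : (0 <= Pr I E)%R.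
Proof.
by rewrite -lee_fin PrE; apply: esum_ge0 => D [hD _]; rewrite lee_fin pdb_P_ge0.
Qed.

Lemma Pr_le1 E : (Pr I E <= 1)%R.
Proof. by rewrite -lee_fin PrE esum_P_setI_le1. Qed.

Lemma expect_indicator E (b : instance ar -> bool) : (forall D, b D <-> E D) ->
  expect (fun D => (b D)%:R) = (Pr I E)%:E.
Proof.
move=> bE; rewrite PrE esum_mkcondr; apply: eq_esum => D _.
case: ifPn => [/set_mem/bE -> | /negP ED]; first by rewrite mul1r.
by case: (boolP (b D)) => [/bE/mem_set//|_]; rewrite mul0r.
Qed.

Lemma le_expect_atom X D0 : pdb_dom I D0 ->
  (forall D, pdb_dom I D -> (0 <= X D)%R) -> (X D0 * pdb_P I D0)%:E <= expect X.
Proof.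
move=> hD0 X0; apply: esum_ge; exists [set D0]; last by rewrite fsbig_set1.
by split=> [|D ->//]; exact: finite_set1.
Qed.

Lemma pdb_exists_P_gt0 : exists2 D0, pdb_dom I D0 & (0 < pdb_P I D0)%R.
Proof.
apply: contrapT => no_pos.
suff : \esum_(D in pdb_dom I) (pdb_P I D)%:E = 0.
  by rewrite pdb_P_sum1 => /eqP; rewrite onee_eq0.
apply: esum1 => D hD; congr EFin; apply/eqP; rewrite eq_le pdb_P_ge0 // andbT.
by rewrite leNgt; apply/negP => P_gt0; apply: no_pos; exists D.
Qed.

End Expectation.

Lemma count_mem_le_card (T : choiceType) (F : seq T) (D : {fset T}) :
  uniq F -> (count [in D] F <= #|` D|)%N.
Proof.
move=> uF; rewrite -size_filter; apply: uniq_leq_size; first exact: filter_uniq.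
by move=> x; rewrite mem_filter => /andP[].
Qed.

Lemma count_mem_eq_card (T : choiceType) (F : seq T) (D : {fset T}) :
  uniq F -> {subset D <= F} -> count [in D] F = #|` D|.
Proof.
move=> uF DF; rewrite -size_filter; apply: perm_size; apply: uniq_perm.
- exact: filter_uniq.
- exact: fset_uniq.
- by move=> x; rewrite mem_filter andb_idr //; apply: DF.
Qed.

Section TupleIndependence.
Variables (R : realType) (S : finType) (ar : S -> nat) (I : pdb R ar).

Definition fact_prob (f : fact ar) : R := Pr I [set D | f \in D].

Lemma fact_prob_ge0 f : 0 <= fact_prob f. Proof. exact: Pr_ge0. Qed.

Lemma fact_prob_le1 f : fact_prob f <= 1. Proof. exact: Pr_le1. Qed.

Definition incl_pow (z : R) (A B : seq (fact ar)) (D : instance ar) : R :=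
  (all [in D] A)%:R * z ^+ count [in D] B.

Lemma incl_pow_ge0 z A B D : 0 <= z -> 0 <= incl_pow z A B D.
Proof. by move=> z0; rewrite mulr_ge0 ?exprn_ge0. Qed.

Lemma incl_pow_cons z A g B D :
  incl_pow z A (g :: B) D = incl_pow z A B D + (z - 1) * incl_pow z (rcons A g) B D.
Proof.
rewrite /incl_pow -cats1 all_cat /= andbT.
case: (all _ A); case: (g \in D); rewrite /= ?mul0r ?mulr0 ?addr0 ?mul1r //.
by rewrite add1n exprS mulrBl mul1r addrC subrK.
Qed.

Hypothesis I_ti : tuple_independent I.

Lemma expect_incl_pow z : 0 <= z -> forall B A, uniq (A ++ B) ->
  expect I (incl_pow z A B) =
  (\prod_(f <- A) fact_prob f * \prod_(g <- B) (1 + (z - 1) * fact_prob g))%:E.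
Proof.
move=> z0; elim=> [|g B IH] A uAB.
  have -> : incl_pow z A [::] = fun D => (all [in D] A)%:R.
    by apply/funext => D; rewrite /incl_pow expr0 mulr1.
  rewrite (@expect_indicator _ _ _ I [set D | forall f, f \in A -> f \in D]).
    by rewrite I_ti ?big_nil ?mulr1 // -(cats0 A).
  by move=> D; split=> /allP.
have uA'B : uniq (rcons A g ++ B) by rewrite cat_rcons.
have uAB' : uniq (A ++ B).
  exact: subseq_uniq (cat_subseq (subseq_refl A) (subseq_cons B g)) uAB.
rewrite (expect_lincomb (fun D _ => incl_pow_cons z A g B D) (IH _ uAB') (IH _ uA'B)).
  congr EFin; rewrite big_rcons big_cons /=.
  set a := \prod_(f <- A) _; set b := \prod_(g <- B) _.
  rewrite [in RHS]mulrDl mul1r mulrDr; congr (_ + _).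
  by rewrite !mulrA [(z - 1) * a]mulrC.
all: by move=> D _; apply: incl_pow_ge0.
Qed.

Lemma expect_pow_count_le z F : 0 <= z -> uniq F ->
  (expect I (fun D => (z ^+ count [in D] F)%R) <=
   (expR ((z - 1) * \sum_(g <- F) fact_prob g))%:E)%E.
Proof.
move=> z0 uF; have := expect_incl_pow z0 (A := [::]) uF.
have -> : incl_pow z [::] F = fun D => z ^+ count [in D] F.
  by apply/funext => D; rewrite /incl_pow mul1r.
rewrite big_nil mul1r => ->; rewrite lee_fin mulr_sumr.
apply: prod1D_le_expR_sum => g; rewrite mulrBl mul1r.
have := mulr_ge0 z0 (fact_prob_ge0 g); have := fact_prob_le1 g; lra.
Qed.

Lemma sum_fact_prob_bounded :
  exists M, forall F, uniq F -> \sum_(g <- F) fact_prob g <= M.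
Proof.
have [D0 D0_dom P_gt0] := pdb_exists_P_gt0 I.
pose c := pdb_P I D0 * 2^-1 ^+ #|` D0|.
have c_gt0 : 0 < c by rewrite mulr_gt0 // exprn_gt0.
exists (2 / c) => F uF; set s := \sum_(g <- F) _.
have s_ge0 : 0 <= s by apply: sumr_ge0 => g _; apply: fact_prob_ge0.
have c_le : c <= expR (- (2^-1 * s)).
  have -> : - (2^-1 * s) = (2^-1 - 1) * s by lra.
  rewrite -lee_fin; apply: le_trans (expect_pow_count_le _ uF); last by lra.
  apply: le_trans (le_expect_atom D0_dom _) => [|D _]; last exact: exprn_ge0.
  rewrite lee_fin mulrC; apply: ler_wpM2l; first exact: ltW.
  by apply: ler_wiXn2l; [lra|lra|exact: count_mem_le_card].
have ce : c * expR (2^-1 * s) <= 1.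
  by rewrite -ler_pdivlMr ?expR_gt0 // div1r -expRN.
have := le_trans (ler_wpM2l (ltW c_gt0) (expR_ge1Dx (2^-1 * s))) ce.
rewrite ler_pdivlMr //; nra.
Qed.

Lemma expect_expR_card_lt_pinfty :
  (expect I (fun D => expR (#|` D|%:R)) < +oo)%E.
Proof.
have [M sum_le] := sum_fact_prob_bounded.
have e1_ge0 : 0 <= expR 1 - 1 :> R by have := expR_ge1Dx (1 : R); lra.
apply: (@le_lt_trans _ _ (expR ((expR 1 - 1) * M))%:E); last exact: ltry.
rewrite /expect /esum; apply: ge_ereal_sup => _ [X [finX X_dom] <-].
pose F := undup (flatten [seq enum_fset D | D <- fset_set X]).
have uF : uniq F := undup_uniq _.
have DF D : X D -> {subset D <= F}.
  move=> XD f Df; rewrite mem_undup; apply/flattenP; exists (enum_fset D) => //.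
  by apply: map_f; rewrite in_fset_set // mem_set.
have E_le := expect_pow_count_le (expR_ge0 1) uF.
apply: (le_trans _ (le_trans E_le _)); last first.
  by rewrite lee_fin ler_expR ler_wpM2l // sum_le.
apply: esum_ge; exists X => //; apply: lee_fsum => // D XD.
by rewrite -[#|` D|%:R]mulr1 expRM_natl count_mem_eq_card //; exact: DF.
Qed.

End TupleIndependence.

Section ViewSize.
Local Open Scope nat_scope.

Lemma leq_expn2r m n e : m <= n -> m ^ e <= n ^ e.
Proof. by case: e => [|e] // le_mn; rewrite leq_exp2r. Qed.

Lemma size_flatten_map_le (T : eqType) (T' : Type) (G : T -> seq T') r b :
  (forall x, x \in r -> size (G x) <= b) -> size (flatten (map G r)) <= size r * b.
Proof.
elim: r => [|x r IH] //= Gb; rewrite size_cat mulSn leq_add ?Gb ?mem_head //.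
by apply: IH => y r_y; rewrite Gb // in_cons r_y orbT.
Qed.

Lemma size_tuples (s : seq U) n : size (tuples s n) = size s ^ n.
Proof. by elim: n => //= n IH; rewrite size_allpairs IH expnS. Qed.

Variables (S : finType) (ar : S -> nat) (S' : finType) (ar' : S' -> nat).

Lemma size_adom (D : instance ar) : size (adom D) <= #|` D| * \max_(r : S) ar r.
Proof.
by apply: size_flatten_map_le => f _; rewrite (eqP (valP f)) leq_bigmax.
Qed.

Lemma view_inst_card_le (V : fo_view ar ar') :
  exists m d, forall D, #|` view_inst V D| <= m * (#|` D|).+1 ^ d.
Proof.
pose a := \max_(r : S) ar r; pose c := \max_(R : S') size (consts (vphi V R)).
pose d := \max_(R : S') ar' R.
exists (#|S'| * (a + c + 1) ^ d), d => D.
rewrite -mulnA -expnMn /view_inst card_fseq (leq_trans (size_undup _)) //.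
rewrite size_pmap (leq_trans (count_size _ _)) // cardE.
apply: size_flatten_map_le => R _.
rewrite size_map size_filter (leq_trans (count_size _ _)) // size_tuples size_cat.
apply: (@leq_trans (((a + c + 1) * (#|` D|).+1) ^ ar' R)).
  apply: leq_expn2r; have := size_adom D.
  have : size (consts (vphi V R)) <= c by apply: leq_bigmax.
  rewrite -/a; nia.
by apply: leq_pexp2l; [rewrite muln_gt0 addn1|apply: leq_bigmax].
Qed.

End ViewSize.

Section Moments.
Variables (R : realType) (S : finType) (ar : S -> nat) (S' : finType) (ar' : S' -> nat).

Lemma expect_pushforward (I : pdb R ar) (J : pdb R ar')
    (v : instance ar -> instance ar') (X : instance ar' -> R) :
  pdb_dom J = v @` pdb_dom I ->
  (forall D', pdb_dom J D' -> pdb_P J D' = Pr I [set D | v D = D']) ->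
  (forall D, pdb_dom I D -> 0 <= X (v D)) ->
  expect J X = expect I (X \o v).
Proof.
move=> domJ PJ X0; rewrite /expect.
have P0 D : pdb_dom I D -> (0 <= (pdb_P I D)%:E)%E by move/pdb_P_ge0; rewrite lee_fin.
transitivity (\esum_(D' in v @` pdb_dom I)
    \esum_(D in pdb_dom I `&` [set D | v D = D']) (X (v D) * pdb_P I D)%:E).
  rewrite domJ; apply: eq_esum => _ [D0 D0_dom <-].
  rewrite PJ; last by rewrite domJ; exists D0.
  rewrite EFinM PrE -ge0_esumZl ?X0 // => [|D [D_dom _]]; last exact: P0.
  by apply: eq_esum => D [_ /= ->]; rewrite EFinM.
rewrite esum_esum => [|D' D _ [D_dom _]]; last by rewrite lee_fin mulr_ge0 ?X0 ?pdb_P_ge0.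
rewrite (_ : _ `*`` _ = (fun D => (v D, D)) @` pdb_dom I).
  by rewrite esum_image // => D1 D2 _ _ [].
apply/seteqP; split => [[D' D] [_ [D_dom /= vD]]|_ [D D_dom <-]].
  by exists D => //; rewrite vD.
by split; [exists D|].
Qed.

Lemma view_card_pow_le_expR (V : fo_view ar ar') k :
  exists2 C : R, 0 <= C & forall D,
    (#|` view_inst V D|%:R) ^+ k <= C * expR (#|` D|%:R).
Proof.
have [m [d card_le]] := view_inst_card_le V.
exists ((m ^ k * (d * k)`!)%:R * expR 1) => [|D]; first by rewrite mulr_ge0 ?expR_ge0.
set n := #|` D|.
have pow_le : (#|` view_inst V D| ^ k <= m ^ k * n.+1 ^ (d * k))%N.
  by rewrite expnM -expnMn leq_expn2r.
apply: (@le_trans _ _ (m ^ k * n.+1 ^ (d * k))%:R); first by rewrite -natrX ler_nat.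
rewrite !natrM -!mulrA; apply: ler_wpM2l => //.
by rewrite natrX -expRD addrC natr1; apply: exprn_le_fact_expR.
Qed.

End Moments.

Unset Implicit Arguments.
Set Strict Implicit.

Theorem proposition3p7 (R : realType) (S' : finType) (ar' : S' -> nat)
  (J : pdb R ar') :
  (0 < #|S'|)%N -> in_FO_TI J -> finite_moments (pdb_dom J) (pdb_P J).
Proof.
move=> _ [S [ar [I [V [_ [I_ti [domJ PJ]]]]]]] k _.
have [C C_ge0 pow_le] := view_card_pow_le_expR R V k.
rewrite -/(expect J _) (expect_pushforward domJ PJ) => [|D _]; last exact: exprn_ge0.
apply: (@le_lt_trans _ _ (C%:E * expect I (fun D => expR #|` D|%:R))%E).
  rewrite -expectZ //.
  by apply: le_expect => D _; rewrite exprn_ge0 //= pow_le.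
apply: lte_mul_pinfty; [by rewrite lee_fin|by []|].
exact: expect_expR_card_lt_pinfty.
Qed.
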